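(* Let $[a,b]$ be an interval of length $\ell=b-a+1$ and $\bar y_{a\to b}:=\frac1\ell\sum_{j=a}^by_j$. Let $x_j$ be the predictions of FLH-OGD. Case 1: if the offline optimal takes the form of Structure 1 on $[a,b]$ and $\bar y_{a\to b}\ge B$, then $\sum_{j=a}^b(y_j-x_j)^2-(y_j-u_j)^2\le 10(B+G)^2\log n-\ell(B-u_a)^2$. Case 2: if the offline optimal takes the form of Structure 2 on $[a,b]$ and $\bar y_{a\to b}\le -B$, then $\sum_{j=a}^b(y_j-x_j)^2-(y_j-u_j)^2\le 10(B+G)^2\log n-\ell(B+u_a)^2$.
   Context: Squared loss game: $n\ge 3$, $B\ge 1$, $G\ge B$; for $t=1,\dots,n$ the learner predicts $x_t\in[-B,B]$, then the adversary reveals $y_t\in[-G,G]$. $[a,b]=\{a,\dots,b\}$. FLH-OGD: For each $j\in[n]$ a base learner $E^j$ is started at time $j$; it runs projected online gradient descent on $[-B,B]$ on the losses $x\mapsto (y_t-x)^2$, $t\ge j$: its first prediction $x^{(j)}_j$ is a fixed point of $[-B,B]$, and $x^{(j)}_{t+1}=\Pi\big(x^{(j)}_t-\tfrac{1}{2\tau}\cdot 2(x^{(j)}_t-y_t)\big)$ with $\tau=t-j+1$, $\Pi$ the projection onto $[-B,B]$. The FLH meta-algorithm with learning rate $\zeta$ keeps a probability vector $v_t=(v_t^{(1)},\dots,v_t^{(t)})$, $v_1=(1)$; it predicts $x_t=\sum_{j\le t}v_t^{(j)}x^{(j)}_t$; after $y_t$ is revealed it sets $\hat v^{(i)}_{t+1}=v_t^{(i)}e^{-\zeta(y_t-x_t^{(i)})^2}/\sum_{j\le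 t}v_t^{(j)}e^{-\zeta(y_t-x_t^{(j)})^2}$ for $i\le t$, then $v^{(t+1)}_{t+1}=1/(t+1)$ and $v^{(i)}_{t+1}=(1-\tfrac1{t+1})\hat v^{(i)}_{t+1}$. FLH-OGD uses $\zeta=1/(2(G+B)^2)$. Offline optimal: given $C_n>0$, $u_1,\dots,u_n$ is an optimal solution of: minimize $\frac12\sum_{t=1}^n(y_t-\tilde u_t)^2$ subject to $\sum_{t=2}^{n}|\tilde u_t-\tilde u_{t-1}|\le C_n$ and $-B\le\tilde u_t\le B$; with optimal dual variables $\lambda\ge0$ (TV constraint) and $\gamma^\pm_t\ge0$ (box constraints) satisfying the KKT conditions: there are $s_t\in[-1,1]$ with $s_t=\mathrm{sign}(u_{t+1}-u_t)$ whenever $u_{t+1}\ne u_t$, $s_0=s_n=0$, $u_t-y_t=\lambda(s_t-s_{t-1})+\gamma_t^--\gamma_t^+$, and $\lambda(\sum_{t=2}^n|u_t-u_{t-1}|-C_n)=0$, $\gamma_t^-(u_t+B)=0$, $\gamma_t^+(u_t-B)=0$. Structure 1 on $[a,b]\subseteq\{2,\dots,n-1\}$: $u_j=u_a\in(-B,B)$ for all $j\in[a,b]$, $u_b>u_{b+1}$ and $u_a>u_{a-1}$. Structure 2 on $[a,b]\subseteq\{2,\dots,n-1\}$: $u_j=u_a\in(-B,B)$ for all $j\in[a,b]$, $u_b<u_{b+1}$ and $u_a<u_{a-1}$. *)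

From Stdlib Require Import Reals Lra Lia List.
Open Scope R_scope.

(* sumR f a b = f a + f (a+1) + ... + f b  (0 if b < a) *)
Definition sumR (f : nat -> R) (a b : nat) : R :=
  fold_right Rplus 0 (map f (seq a (S b - a))).

Definition projB (B z : R) : R := Rmax (-B) (Rmin B z).

(* Base learner E^j: projected OGD started at time j with first prediction x0.
   ogd B y x0 j k = x^{(j)}_{j+k}; the step from time t=j+k' uses tau = t-j+1 = k'+1. *)
Fixpoint ogd (B : R) (y : nat -> R) (x0 : R) (j k : nat) : R :=
  match k with
  | O => x0
  | S k' =>
      let x := ogd B y x0 j k' in
      projB B (x - (1 / (2 * INR (S k'))) * (2 * (x - y (j + k')%nat)))
  end.

(* x^{(j)}_t, for t >= j; init j is the fixed first prediction of E^j *)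
Definition base (B : R) (y : nat -> R) (init : nat -> R) (j t : nat) : R :=
  ogd B y (init j) j (t - j).

Definition flh_update (B zeta : R) (y : nat -> R) (init : nat -> R)
    (t : nat) (w : nat -> R) : nat -> R :=
  let e := fun j => w j * exp (- zeta * (y t - base B y init j t) ^ 2) in
  let Z := sumR e 1 t in
  fun i =>
    if andb (Nat.leb 1 i) (Nat.leb i t) then (1 - 1 / INR (S t)) * (e i / Z)
    else if Nat.eqb i (S t) then 1 / INR (S t)
    else 0.

(* flh_weights ... t = v_t (t >= 1), as a function of the index i in [1,t]. *)
Fixpoint flh_weights (B zeta : R) (y : nat -> R) (init : nat -> R) (t : nat)
  : nat -> R :=
  match t with
  | O => fun _ => 0
  | S t' =>
      match t' with
      | O => fun i => if Nat.eqb i 1 then 1 else 0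
      | S _ => flh_update B zeta y init t' (flh_weights B zeta y init t')
      end
  end.

Definition flh_zeta (B G : R) : R := 1 / (2 * (G + B) ^ 2).

Definition flh_ogd_pred (B G : R) (y : nat -> R) (init : nat -> R) (t : nat) : R :=
  sumR (fun j => flh_weights B (flh_zeta B G) y init t j * base B y init j t) 1 t.

Definition sgnR (x : R) : R :=
  if Rlt_dec 0 x then 1 else if Rlt_dec x 0 then -1 else 0.

Definition TV (u : nat -> R) (n : nat) : R :=
  sumR (fun t => Rabs (u t - u (t - 1)%nat)) 2 n.

Definition feasible (n : nat) (B Cn : R) (u : nat -> R) : Prop :=
  TV u n <= Cn /\ (forall t, (1 <= t <= n)%nat -> -B <= u t <= B).

Definition offline_obj (n : nat) (y u : nat -> R) : R :=
  / 2 * sumR (fun t => (y t - u t) ^ 2) 1 n.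

Definition offline_optimal (n : nat) (B Cn : R) (y u : nat -> R) : Prop :=
  feasible n B Cn u /\
  (forall v, feasible n B Cn v -> offline_obj n y u <= offline_obj n y v).

(* KKT conditions with dual variables lam (TV), gm = gamma^-, gp = gamma^+,
   and subgradient signs s_t, t = 0..n. *)
Definition KKT (n : nat) (B Cn : R) (y u : nat -> R)
    (lam : R) (gm gp s : nat -> R) : Prop :=
  0 <= lam /\
  (forall t, (1 <= t <= n)%nat -> 0 <= gm t /\ 0 <= gp t) /\
  (forall t, (t <= n)%nat -> -1 <= s t <= 1) /\
  (forall t, (1 <= t <= n - 1)%nat -> u (S t) <> u t ->
       s t = sgnR (u (S t) - u t)) /\
  s 0%nat = 0 /\ s n = 0 /\
  (forall t, (1 <= t <= n)%nat ->
       u t - y t = lam * (s t - s (t - 1)%nat) + gm t - gp t) /\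
  lam * (TV u n - Cn) = 0 /\
  (forall t, (1 <= t <= n)%nat -> gm t * (u t + B) = 0 /\ gp t * (u t - B) = 0).

Definition structure1 (n : nat) (B : R) (u : nat -> R) (a b : nat) : Prop :=
  (2 <= a)%nat /\ (a <= b)%nat /\ (b <= n - 1)%nat /\
  (forall j, (a <= j <= b)%nat -> u j = u a) /\
  -B < u a < B /\ u b > u (S b) /\ u a > u (a - 1)%nat.

Definition structure2 (n : nat) (B : R) (u : nat -> R) (a b : nat) : Prop :=
  (2 <= a)%nat /\ (a <= b)%nat /\ (b <= n - 1)%nat /\
  (forall j, (a <= j <= b)%nat -> u j = u a) /\
  -B < u a < B /\ u b < u (S b) /\ u a < u (a - 1)%nat.

From Stdlib Require Import Reals Lra Lia List.
From Coquelicot Require Import Coquelicot.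
Open Scope R_scope.

(* FLH-OGD has logarithmic regret against every fixed prediction [xs] in [[-B, B]] on
   every interval [[a, b]]: the squared loss is [zeta]-exp-concave on [[-B, B]], so the
   log-weight [ln (t v_t^(a))] of the expert started at [a] grows by at least [zeta] times
   the meta-algorithm's excess loss over that expert, costing [(1/zeta) ln (b + 1)]; and
   the expert itself, OGD with step [1/(2 tau)], has regret at most [2 (B + G)^2 ln (l + 1)].
   On a segment where [u] is constant equal to [c], moving the comparator from [c] to the
   boundary point [xs = B] (resp. [-B]) changes its loss by [l (xs^2 - c^2) + 2 (c - xs) l ybar],
   which is at most [- l (xs - c)^2] because [ybar] lies beyond [xs]. *)

Lemma MVT_derive (g g' : R -> R) (p q : R) :
  (forall c, is_derive g c (g' c)) ->
  exists c, Rmin p q <= c <= Rmax p q /\ g q - g p = g' c * (q - p).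
Proof.
  intros Dg. apply MVT_gen; intros c _; [apply Dg|].
  apply continuity_pt_filterlim, (@ex_derive_continuous R_AbsRing R_NormedModule).
  exists (g' c); apply Dg.
Qed.

Lemma concave_le_tangent (f f' f'' : R -> R) (x0 x : R) :
  (forall c, is_derive f c (f' c)) ->
  (forall c, is_derive f' c (f'' c)) ->
  (forall c, Rmin x0 x <= c <= Rmax x0 x -> f'' c <= 0) ->
  f x <= f x0 + f' x0 * (x - x0).
Proof.
  intros Df Df' Hf''.
  destruct (MVT_derive f f' x0 x Df) as [c [Hc Ef]].
  destruct (MVT_derive f' f'' x0 c Df') as [c' [Hc' Ef']].
  assert (Hc'x : Rmin x0 x <= c' <= Rmax x0 x).
  { revert Hc Hc'; unfold Rmin, Rmax; repeat destruct Rle_dec; lra. }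
  assert (Hsame : 0 <= (c - x0) * (x - x0)).
  { revert Hc; unfold Rmin, Rmax; destruct Rle_dec; nra. }
  specialize (Hf'' c' Hc'x).
  assert (f'' c' * ((c - x0) * (x - x0)) <= 0) by nra.
  nra.
Qed.

Lemma sq_dist_between_le (y p q c : R) :
  Rmin p q <= c <= Rmax p q -> (y - c) ^ 2 <= Rmax ((y - p) ^ 2) ((y - q) ^ 2).
Proof.
  intros Hc.
  assert (Hpq : (y - c) ^ 2 <= (y - p) ^ 2 \/ (y - c) ^ 2 <= (y - q) ^ 2).
  { revert Hc; unfold Rmin, Rmax; destruct Rle_dec; intros Hc;
      destruct (Rle_dec c y); [left | right | right | left]; nra. }
  destruct Hpq as [Hp | Hq].
  - exact (Rle_trans _ _ _ Hp (Rmax_l _ _)).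
  - exact (Rle_trans _ _ _ Hq (Rmax_r _ _)).
Qed.

(* The squared loss is [1/(2 D^2)]-exp-concave on predictions at distance at most [D]
   from the outcome: [exp (- al (y - x)^2)] is concave where [2 al (y - x)^2 <= 1]. *)
Lemma exp_neg_sq_tangent (al y m x : R) :
  0 < al -> 2 * al * (y - m) ^ 2 <= 1 -> 2 * al * (y - x) ^ 2 <= 1 ->
  exp (- al * (y - x) ^ 2) <= exp (- al * (y - m) ^ 2) * (1 + 2 * al * (y - m) * (x - m)).
Proof.
  intros Hal Hm Hx.
  pose (h c := exp (- al * (y - c) ^ 2)).
  pose (h' c := 2 * al * (y - c) * h c).
  pose (h'' c := 2 * al * h c * (2 * al * (y - c) ^ 2 - 1)).
  assert (Dh : forall c, is_derive h c (h' c)).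
  { intros c; unfold h', h; auto_derive; [easy|].
    replace (- al * ((y + - c) * ((y + - c) * 1))) with (- al * (y - c) ^ 2) by ring.
    ring. }
  assert (Dh' : forall c, is_derive h' c (h'' c)).
  { intros c; unfold h'', h', h; auto_derive; [easy|].
    replace (- al * ((y + - c) * ((y + - c) * 1))) with (- al * (y - c) ^ 2) by ring.
    ring. }
  assert (Hneg : forall c, Rmin m x <= c <= Rmax m x -> h'' c <= 0).
  { intros c Hc.
    assert (Hc2 : 2 * al * (y - c) ^ 2 <= 1).
    { pose proof (sq_dist_between_le y m x c Hc) as Hmax.
      unfold Rmax in Hmax; destruct Rle_dec; nra. }
    assert (0 < h c) by apply exp_pos.
    unfold h''. apply Rmult_le_0_l; [| lra].
    apply Rmult_le_pos; lra. }
  pose proof (concave_le_tangent h h' h'' m x Dh Dh' Hneg) as T.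
  unfold h', h in T. apply (Rle_trans _ _ _ T). right; ring.
Qed.

Definition sum_range (f : nat -> R) (a k : nat) : R :=
  fold_right Rplus 0 (map f (seq a k)).

Lemma sumR_sum_range (f : nat -> R) (a b : nat) : sumR f a b = sum_range f a (S b - a).
Proof. reflexivity. Qed.

Lemma sum_range_0 (f : nat -> R) (a : nat) : sum_range f a 0 = 0.
Proof. reflexivity. Qed.

Lemma sum_range_S (f : nat -> R) (a k : nat) :
  sum_range f a (S k) = sum_range f a k + f (a + k)%nat.
Proof.
  induction k as [|k IH] in a |- *.
  - change (f a + 0 = 0 + f (a + 0)%nat). rewrite Nat.add_0_r; ring.
  - change (f a + sum_range f (S a) (S k) = f a + sum_range f (S a) k + f (a + S k)%nat).
    rewrite IH. replace (a + S k)%nat with (S a + k)%nat by lia. ring.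
Qed.

Lemma sum_range_ext (f g : nat -> R) (a k : nat) :
  (forall i, (a <= i < a + k)%nat -> f i = g i) -> sum_range f a k = sum_range g a k.
Proof.
  induction k as [|k IH]; intros Hfg; [reflexivity|].
  rewrite !sum_range_S, IH, (Hfg (a + k)%nat); [reflexivity | lia |].
  intros i Hi; apply Hfg; lia.
Qed.

Lemma sum_range_le (f g : nat -> R) (a k : nat) :
  (forall i, (a <= i < a + k)%nat -> f i <= g i) -> sum_range f a k <= sum_range g a k.
Proof.
  induction k as [|k IH]; intros Hfg; [rewrite !sum_range_0; lra|].
  rewrite !sum_range_S.
  apply Rplus_le_compat; [apply IH; intros i Hi | ]; apply Hfg; lia.
Qed.

Lemma sum_range_plus (f g : nat -> R) (a k : nat) :
  sum_range (fun i => f i + g i) a k = sum_range f a k + sum_range g a k.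
Proof. induction k as [|k IH]; [rewrite !sum_range_0; ring | rewrite !sum_range_S, IH; ring]. Qed.

Lemma sum_range_scal (c : R) (f : nat -> R) (a k : nat) :
  sum_range (fun i => c * f i) a k = c * sum_range f a k.
Proof. induction k as [|k IH]; [rewrite !sum_range_0; ring | rewrite !sum_range_S, IH; ring]. Qed.

Lemma sum_range_const (c : R) (a k : nat) : sum_range (fun _ => c) a k = INR k * c.
Proof. induction k as [|k IH]; [rewrite sum_range_0; simpl; ring | rewrite sum_range_S, IH, S_INR; ring]. Qed.

Lemma sum_range_telescope (F : nat -> R) (a k : nat) :
  sum_range (fun i => F (S i) - F i) a k = F (a + k)%nat - F a.
Proof.
  induction k as [|k IH]; [rewrite sum_range_0, Nat.add_0_r; ring|].
  rewrite sum_range_S, IH, <- plus_n_Sm; ring.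
Qed.

Lemma sum_range_shift (f : nat -> R) (a k : nat) :
  sum_range f a k = sum_range (fun i => f (a + i)%nat) 0 k.
Proof. induction k as [|k IH]; [reflexivity | rewrite !sum_range_S, IH; reflexivity]. Qed.

Lemma sum_range_pos (f : nat -> R) (a k : nat) :
  (0 < k)%nat -> (forall i, (a <= i < a + k)%nat -> 0 < f i) -> 0 < sum_range f a k.
Proof.
  induction k as [|[|k] IH]; intros Hk Hf; [lia | |].
  - rewrite sum_range_S, sum_range_0, Rplus_0_l. apply Hf; lia.
  - rewrite sum_range_S. apply Rplus_lt_0_compat; [apply IH; [lia|] | ]; intros; apply Hf; lia.
Qed.

Lemma sum_range_nonneg (f : nat -> R) (a k : nat) :
  (forall i, (a <= i < a + k)%nat -> 0 <= f i) -> 0 <= sum_range f a k.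
Proof.
  intros Hf.
  apply Rle_trans with (sum_range (fun _ => 0) a k).
  - rewrite sum_range_const; lra.
  - apply sum_range_le, Hf.
Qed.

Lemma term_le_sum_range (f : nat -> R) (a k i : nat) :
  (forall j, (a <= j < a + k)%nat -> 0 <= f j) -> (a <= i < a + k)%nat ->
  f i <= sum_range f a k.
Proof.
  induction k as [|k IH]; intros Hf Hi; [lia|].
  rewrite sum_range_S.
  destruct (Nat.eq_dec i (a + k)) as [-> | Hne].
  - pose proof (sum_range_nonneg f a k ltac:(intros; apply Hf; lia)). lra.
  - pose proof (IH ltac:(intros; apply Hf; lia) ltac:(lia)).
    pose proof (Hf (a + k)%nat ltac:(lia)). lra.
Qed.

Section WeightedMean.

Variables (w X : nat -> R) (a k : nat).
Hypothesis w_nonneg : forall i, (a <= i < a + k)%nat -> 0 <= w i.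
Hypothesis w_sum1 : sum_range w a k = 1.

Lemma weighted_mean_bounds (lo hi : R) :
  (forall i, (a <= i < a + k)%nat -> lo <= X i <= hi) ->
  lo <= sum_range (fun i => w i * X i) a k <= hi.
Proof.
  intros HX. split.
  - apply Rle_trans with (sum_range (fun i => lo * w i) a k).
    + rewrite sum_range_scal, w_sum1; lra.
    + apply sum_range_le; intros i Hi.
      pose proof (w_nonneg i Hi); pose proof (HX i Hi); nra.
  - apply Rle_trans with (sum_range (fun i => hi * w i) a k).
    + apply sum_range_le; intros i Hi.
      pose proof (w_nonneg i Hi); pose proof (HX i Hi); nra.
    + rewrite sum_range_scal, w_sum1; lra.
Qed.

Lemma exp_neg_sq_mix (al y : R) :
  let m := sum_range (fun i => w i * X i) a k in
  0 < al ->
  (forall i, (a <= i < a + k)%nat -> 2 * al * (y - X i) ^ 2 <= 1) ->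
  2 * al * (y - m) ^ 2 <= 1 ->
  sum_range (fun i => w i * exp (- al * (y - X i) ^ 2)) a k <= exp (- al * (y - m) ^ 2).
Proof.
  intros m Hal HX Hm.
  set (E := exp (- al * (y - m) ^ 2)).
  apply Rle_trans with
    (sum_range (fun i => E * (1 - 2 * al * (y - m) * m) * w i
                         + E * (2 * al * (y - m)) * (w i * X i)) a k).
  - apply sum_range_le; intros i Hi.
    pose proof (exp_neg_sq_tangent al y m (X i) Hal Hm (HX i Hi)) as T.
    pose proof (w_nonneg i Hi).
    apply Rle_trans with (w i * (E * (1 + 2 * al * (y - m) * (X i - m)))).
    + apply Rmult_le_compat_l; assumption.
    + right; ring.
  - rewrite sum_range_plus, !sum_range_scal, w_sum1. fold m. right; ring.
Qed.

End WeightedMean.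

Lemma inv_le_ln_succ_diff (x : R) : 1 <= x -> / x <= 2 * (ln (x + 1) - ln x).
Proof.
  intros Hx.
  pose proof (exp_ineq1_le (ln (x / (x + 1)))) as Hexp.
  rewrite exp_ln in Hexp by (apply Rdiv_lt_0_compat; lra).
  rewrite ln_div in Hexp by lra.
  assert (x / (x + 1) - 1 = - / (x + 1)) by (field; lra).
  assert (/ x <= 2 * / (x + 1)).
  { apply (Rmult_le_reg_l (x * (x + 1))); [nra|].
    field_simplify; lra. }
  lra.
Qed.

Lemma sum_inv_succ_le_ln (k : nat) :
  sum_range (fun i => / INR (S i)) 0 k <= 2 * ln (INR (S k)).
Proof.
  apply Rle_trans with
    (sum_range (fun i => 2 * ln (INR (S (S i))) - 2 * ln (INR (S i))) 0 k).
  - apply sum_range_le; intros i _.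
    rewrite (S_INR (S i)).
    pose proof (inv_le_ln_succ_diff (INR (S i)) ltac:(apply (le_INR 1); lia)). lra.
  - rewrite (sum_range_telescope (fun i => 2 * ln (INR (S i)))).
    cbv beta. rewrite Nat.add_0_l. simpl (INR 1). rewrite ln_1. lra.
Qed.

Lemma projB_bounds (B z : R) : 0 <= B -> -B <= projB B z <= B.
Proof. intros. unfold projB, Rmax, Rmin. repeat destruct Rle_dec; lra. Qed.

Lemma projB_nonexpansive (B z x : R) :
  -B <= x <= B -> (projB B z - x) ^ 2 <= (z - x) ^ 2.
Proof. intros. unfold projB, Rmax, Rmin. repeat destruct Rle_dec; nra. Qed.

Section OGD.

Variables (B G : R) (y : nat -> R) (x0 : R) (j : nat).
Hypothesis x0_bounds : -B <= x0 <= B.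

Lemma ogd_bounds (k : nat) : -B <= ogd B y x0 j k <= B.
Proof. destruct k; simpl; [lra | apply projB_bounds; lra]. Qed.

Lemma ogd_S (k : nat) :
  ogd B y x0 j (S k) =
  projB B (ogd B y x0 j k + (y (j + k)%nat - ogd B y x0 j k) / INR (S k)).
Proof.
  change (ogd B y x0 j (S k)) with
    (projB B (ogd B y x0 j k
              - (1 / (2 * INR (S k))) * (2 * (ogd B y x0 j k - y (j + k)%nat)))).
  f_equal. field. apply not_0_INR; lia.
Qed.

(* The step [1/(2 tau)] is [1/(H tau)] for the [H = 2]-strongly convex squared loss,
   which makes the potential [k (x_k - xs)^2] telescope. *)
Lemma ogd_regret_potential (xs : R) (k : nat) :
  -B <= xs <= B ->
  (forall i, (i < k)%nat -> -G <= y (j + i)%nat <= G) ->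
  sum_range (fun i => (y (j + i)%nat - ogd B y x0 j i) ^ 2 - (y (j + i)%nat - xs) ^ 2) 0 k
  + INR k * (ogd B y x0 j k - xs) ^ 2
  <= (B + G) ^ 2 * sum_range (fun i => / INR (S i)) 0 k.
Proof.
  intros Hxs Hy. induction k as [|k IH].
  - rewrite !sum_range_0; simpl; lra.
  - rewrite !sum_range_S, ogd_S; simpl (0 + k)%nat.
    specialize (IH ltac:(intros; apply Hy; lia)).
    pose proof (Hy k ltac:(lia)) as Hyk.
    set (X := ogd B y x0 j k) in *.
    set (yk := y (j + k)%nat) in *.
    assert (HX : -B <= X <= B) by apply ogd_bounds.
    set (z := X + (yk - X) / INR (S k)).
    pose proof (projB_nonexpansive B z xs Hxs) as Hproj.
    pose proof (pos_INR k) as Hk.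
    rewrite S_INR in *.
    assert (Hstep : (yk - X) ^ 2 - (yk - xs) ^ 2 + (INR k + 1) * (z - xs) ^ 2
                    - INR k * (X - xs) ^ 2 = (yk - X) ^ 2 / (INR k + 1)).
    { unfold z; rewrite S_INR. field. lra. }
    assert ((yk - X) ^ 2 / (INR k + 1) <= (B + G) ^ 2 * / (INR k + 1)).
    { apply Rmult_le_compat_r; [left; apply Rinv_0_lt_compat; lra | nra]. }
    assert ((INR k + 1) * (projB B z - xs) ^ 2 <= (INR k + 1) * (z - xs) ^ 2)
      by (apply Rmult_le_compat_l; lra).
    lra.
Qed.

Lemma ogd_regret (xs : R) (k : nat) :
  -B <= xs <= B ->
  (forall i, (i < k)%nat -> -G <= y (j + i)%nat <= G) ->
  sum_range (fun i => (y (j + i)%nat - ogd B y x0 j i) ^ 2 - (y (j + i)%nat - xs) ^ 2) 0 k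
  <= 2 * (B + G) ^ 2 * ln (INR (S k)).
Proof.
  intros Hxs Hy.
  pose proof (ogd_regret_potential xs k Hxs Hy).
  pose proof (sum_inv_succ_le_ln k).
  assert (0 <= INR k * (ogd B y x0 j k - xs) ^ 2)
    by (apply Rmult_le_pos; [apply pos_INR | apply pow2_ge_0]).
  assert ((B + G) ^ 2 * sum_range (fun i => / INR (S i)) 0 k
          <= (B + G) ^ 2 * (2 * ln (INR (S k))))
    by (apply Rmult_le_compat_l; [apply pow2_ge_0 | assumption]).
  lra.
Qed.

End OGD.

Lemma sumR_from_1 (f : nat -> R) (t : nat) : sumR f 1 t = sum_range f 1 t.
Proof. rewrite sumR_sum_range; f_equal; lia. Qed.

Section FLH.

Variables (B zeta : R) (y init : nat -> R).

Definition flh_factor (t j : nat) : R := exp (- zeta * (y t - base B y init j t) ^ 2).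

Definition flh_normalizer (t : nat) : R :=
  sum_range (fun j => flh_weights B zeta y init t j * flh_factor t j) 1 t.

Lemma flh_weights_new (t : nat) :
  (1 <= t)%nat -> flh_weights B zeta y init (S t) (S t) = / INR (S t).
Proof.
  intros Ht; destruct t as [|t]; [lia|].
  change (flh_update B zeta y init (S t) (flh_weights B zeta y init (S t)) (S (S t))
          = / INR (S (S t))).
  unfold flh_update.
  replace (Nat.leb (S (S t)) (S t)) with false by (symmetry; apply Nat.leb_gt; lia).
  rewrite Nat.eqb_refl, Bool.andb_false_r. unfold Rdiv; ring.
Qed.

Lemma flh_weights_old (t i : nat) :
  (1 <= i <= t)%nat ->
  flh_weights B zeta y init (S t) i
  = INR t / INR (S t) * (flh_weights B zeta y init t i * flh_factor t i / flh_normalizer t).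
Proof.
  intros Hi; destruct t as [|t]; [lia|].
  change (flh_update B zeta y init (S t) (flh_weights B zeta y init (S t)) i
          = INR (S t) / INR (S (S t))
            * (flh_weights B zeta y init (S t) i * flh_factor (S t) i
               / flh_normalizer (S t))).
  unfold flh_update, flh_normalizer, flh_factor.
  replace (Nat.leb 1 i) with true by (symmetry; apply Nat.leb_le; lia).
  replace (Nat.leb i (S t)) with true by (symmetry; apply Nat.leb_le; lia).
  rewrite sumR_from_1; cbn [andb]. f_equal.
  rewrite (S_INR (S t)). field. pose proof (pos_INR (S t)); lra.
Qed.

Lemma flh_weights_simplex (t : nat) :
  (1 <= t)%nat ->
  (forall i, (1 <= i <= t)%nat -> 0 < flh_weights B zeta y init t i) /\
  sum_range (flh_weights B zeta y init t) 1 t = 1.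
Proof.
  induction t as [|t IH]; intros Ht; [lia|].
  destruct (Nat.eq_dec t 0) as [-> | Ht0].
  - split.
    + intros i Hi; replace i with 1%nat by lia; simpl; lra.
    + unfold sum_range; simpl; ring.
  - destruct (IH ltac:(lia)) as [Hpos Hsum].
    assert (HZ : 0 < flh_normalizer t).
    { apply sum_range_pos; [lia|]; intros i Hi.
      apply Rmult_lt_0_compat; [apply Hpos; lia | apply exp_pos]. }
    assert (Htpos : 0 < INR t) by (apply lt_0_INR; lia).
    pose proof (lt_0_INR (S t) ltac:(lia)) as HSt.
    split.
    + intros i Hi. destruct (Nat.eq_dec i (S t)) as [-> | Hne].
      * rewrite flh_weights_new by lia. apply Rinv_0_lt_compat; lra.
      * rewrite flh_weights_old by lia.
        apply Rmult_lt_0_compat; [apply Rdiv_lt_0_compat; lra|].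
        apply Rdiv_lt_0_compat; [|exact HZ].
        apply Rmult_lt_0_compat; [apply Hpos; lia | apply exp_pos].
    + rewrite sum_range_S; simpl (1 + t)%nat; rewrite flh_weights_new by lia.
      rewrite (sum_range_ext _ (fun i => INR t / INR (S t) / flh_normalizer t
                    * (flh_weights B zeta y init t i * flh_factor t i))).
      2: { intros i Hi. rewrite flh_weights_old by lia. field; lra. }
      rewrite sum_range_scal. fold (flh_normalizer t).
      rewrite S_INR in *. field; lra.
Qed.

Lemma flh_weights_diag (t : nat) :
  (1 <= t)%nat -> flh_weights B zeta y init t t = / INR t.
Proof.
  intros Ht. destruct t as [|[|t]]; [lia | simpl; lra |].
  apply flh_weights_new; lia.
Qed.

End FLH.

Lemma comparator_shift_gap (l c xs ybar : R) :
  0 <= l -> (c - xs) * (ybar - xs) <= 0 ->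
  l * (xs ^ 2 - c ^ 2) + 2 * (c - xs) * (l * ybar) <= - l * (xs - c) ^ 2.
Proof.
  intros Hl Hside.
  assert (2 * l * ((c - xs) * (ybar - xs)) <= 0) by (apply Rmult_le_0_l; lra).
  replace (l * (xs ^ 2 - c ^ 2) + 2 * (c - xs) * (l * ybar))
    with (- l * (xs - c) ^ 2 + 2 * l * ((c - xs) * (ybar - xs))) by ring.
  lra.
Qed.

Section FLH_OGD.

Variables (n : nat) (B G : R) (y init : nat -> R).
Hypothesis B_ge1 : 1 <= B.
Hypothesis B_le_G : B <= G.
Hypothesis y_bounds : forall t, (1 <= t <= n)%nat -> -G <= y t <= G.
Hypothesis init_bounds : forall j, (1 <= j <= n)%nat -> -B <= init j <= B.

Lemma base_bounds (j t : nat) : (1 <= j <= n)%nat -> -B <= base B y init j t <= B.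
Proof. intros Hj. apply ogd_bounds, init_bounds, Hj. Qed.

Lemma flh_ogd_pred_bounds (t : nat) :
  (1 <= t <= n)%nat -> -B <= flh_ogd_pred B G y init t <= B.
Proof.
  intros Ht. destruct (flh_weights_simplex B (flh_zeta B G) y init t ltac:(lia)) as [Hpos Hsum].
  unfold flh_ogd_pred. rewrite sumR_from_1.
  apply weighted_mean_bounds.
  - intros i Hi; left; apply Hpos; lia.
  - exact Hsum.
  - intros i Hi; apply base_bounds; lia.
Qed.

Lemma flh_zeta_sq_loss_le (t : nat) (x : R) :
  (1 <= t <= n)%nat -> -B <= x <= B -> 2 * flh_zeta B G * (y t - x) ^ 2 <= 1.
Proof.
  intros Ht Hx. pose proof (y_bounds t Ht).
  unfold flh_zeta.
  replace (2 * (1 / (2 * (G + B) ^ 2)) * (y t - x) ^ 2) with ((y t - x) ^ 2 / (G + B) ^ 2)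
    by (field; lra).
  apply Rle_div_l; [nra|]. nra.
Qed.

Lemma flh_normalizer_le (t : nat) :
  (1 <= t <= n)%nat ->
  flh_normalizer B (flh_zeta B G) y init t
  <= exp (- flh_zeta B G * (y t - flh_ogd_pred B G y init t) ^ 2).
Proof.
  intros Ht. destruct (flh_weights_simplex B (flh_zeta B G) y init t ltac:(lia)) as [Hpos Hsum].
  assert (Hz : 0 < flh_zeta B G) by (unfold flh_zeta; apply Rdiv_lt_0_compat; nra).
  unfold flh_normalizer, flh_factor, flh_ogd_pred. rewrite sumR_from_1.
  apply exp_neg_sq_mix; try assumption.
  - intros i Hi; left; apply Hpos; lia.
  - intros i Hi; apply flh_zeta_sq_loss_le; [lia | apply base_bounds; lia].
  - rewrite <- sumR_from_1. apply flh_zeta_sq_loss_le, flh_ogd_pred_bounds; assumption.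
Qed.

Lemma flh_log_weight_step (t a : nat) :
  (1 <= a <= t)%nat -> (t <= n)%nat ->
  flh_zeta B G * ((y t - flh_ogd_pred B G y init t) ^ 2 - (y t - base B y init a t) ^ 2)
  <= ln (INR (S t) * flh_weights B (flh_zeta B G) y init (S t) a)
     - ln (INR t * flh_weights B (flh_zeta B G) y init t a).
Proof.
  intros Ha Htn.
  set (zeta := flh_zeta B G).
  destruct (flh_weights_simplex B zeta y init t ltac:(lia)) as [Hpos _].
  set (v := flh_weights B zeta y init t a).
  set (Z := flh_normalizer B zeta y init t).
  assert (Hv : 0 < v) by (apply Hpos; lia).
  assert (HZ : 0 < Z).
  { apply sum_range_pos; [lia|]; intros i Hi.
    apply Rmult_lt_0_compat; [apply Hpos; lia | apply exp_pos]. }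
  assert (Ht : 0 < INR t) by (apply lt_0_INR; lia).
  assert (Hnext : INR (S t) * flh_weights B zeta y init (S t) a
                  = INR t * v * flh_factor B zeta y init t a / Z).
  { rewrite flh_weights_old by lia. fold v Z. field.
    split; [lra | apply not_0_INR; lia]. }
  assert (HlnZ : ln Z <= - zeta * (y t - flh_ogd_pred B G y init t) ^ 2).
  { rewrite <- ln_exp. apply ln_le; [exact HZ | apply flh_normalizer_le; lia]. }
  assert (HF : 0 < flh_factor B zeta y init t a) by apply exp_pos.
  assert (Htv : 0 < INR t * v) by (apply Rmult_lt_0_compat; lra).
  rewrite Hnext. unfold Rdiv.
  rewrite ln_mult, ln_Rinv, ln_mult by (try apply Rmult_lt_0_compat; try apply Rinv_0_lt_compat; lra).
  unfold flh_factor. rewrite ln_exp. lra.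
Qed.

Lemma flh_regret_vs_expert (a b : nat) :
  (1 <= a <= b)%nat -> (b <= n)%nat ->
  sumR (fun t => (y t - flh_ogd_pred B G y init t) ^ 2 - (y t - base B y init a t) ^ 2) a b
  <= 2 * (B + G) ^ 2 * ln (INR (S b)).
Proof.
  intros Hab Hbn.
  set (zeta := flh_zeta B G).
  set (F t := ln (INR t * flh_weights B zeta y init t a)).
  assert (Hz : 2 * (B + G) ^ 2 = / zeta) by (unfold zeta, flh_zeta; field; nra).
  assert (Hsum : zeta * sumR (fun t => (y t - flh_ogd_pred B G y init t) ^ 2
                                       - (y t - base B y init a t) ^ 2) a b
                 <= F (S b) - F a).
  { rewrite sumR_sum_range, <- sum_range_scal.
    replace (S b) with (a + (S b - a))%nat at 2 by lia.
    rewrite <- (sum_range_telescope F).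
    apply sum_range_le; intros t Ht. apply flh_log_weight_step; lia. }
  assert (HFa : F a = 0).
  { unfold F. rewrite flh_weights_diag by lia.
    rewrite Rinv_r by (apply not_0_INR; lia). apply ln_1. }
  assert (HFb : F (S b) <= ln (INR (S b))).
  { destruct (flh_weights_simplex B zeta y init (S b) ltac:(lia)) as [Hpos Hsum1].
    assert (Hva : 0 < flh_weights B zeta y init (S b) a) by (apply Hpos; lia).
    assert (Hva1 : flh_weights B zeta y init (S b) a <= 1).
    { rewrite <- Hsum1. apply term_le_sum_range; [intros; left; apply Hpos|]; lia. }
    assert (HSb : 0 < INR (S b)) by (apply lt_0_INR; lia).
    unfold F. apply ln_le; [apply Rmult_lt_0_compat; lra | nra]. }
  assert (Hzpos : 0 < zeta) by (unfold zeta, flh_zeta; apply Rdiv_lt_0_compat; nra).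
  rewrite Hz. apply (Rmult_le_reg_l zeta); [exact Hzpos|].
  rewrite <- Rmult_assoc, Rinv_r by lra. lra.
Qed.

Lemma flh_ogd_regret_vs_constant (a b : nat) (xs : R) :
  (1 <= a <= b)%nat -> (b <= n)%nat -> -B <= xs <= B ->
  sumR (fun t => (y t - flh_ogd_pred B G y init t) ^ 2 - (y t - xs) ^ 2) a b
  <= 2 * (B + G) ^ 2 * ln (INR (S b)) + 2 * (B + G) ^ 2 * ln (INR (S (S b - a))).
Proof.
  intros Hab Hbn Hxs.
  pose proof (flh_regret_vs_expert a b Hab Hbn) as Hmeta.
  pose proof (ogd_regret B G y (init a) a (init_bounds a ltac:(lia)) xs (S b - a) Hxs
                ltac:(intros; apply y_bounds; lia)) as Hexpert.
  assert (Hshift : sumR (fun t => (y t - base B y init a t) ^ 2 - (y t - xs) ^ 2) a b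
                   = sum_range (fun i => (y (a + i)%nat - ogd B y (init a) a i) ^ 2
                                         - (y (a + i)%nat - xs) ^ 2) 0 (S b - a)).
  { rewrite sumR_sum_range, sum_range_shift.
    apply sum_range_ext; intros i _. unfold base.
    replace (a + i - a)%nat with i by lia. reflexivity. }
  rewrite sumR_sum_range in Hmeta, Hshift |- *.
  rewrite (sum_range_ext _ (fun t => ((y t - flh_ogd_pred B G y init t) ^ 2
                                      - (y t - base B y init a t) ^ 2)
                                     + ((y t - base B y init a t) ^ 2 - (y t - xs) ^ 2)))
    by (intros; ring).
  rewrite sum_range_plus. lra.
Qed.

Lemma flh_ogd_regret_flat_segment (u : nat -> R) (a b : nat) (xs : R) :
  (1 <= a <= b)%nat -> (b < n)%nat -> -B <= xs <= B ->
  (forall j, (a <= j <= b)%nat -> u j = u a) ->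
  (u a - xs) * (/ INR (S b - a) * sumR y a b - xs) <= 0 ->
  sumR (fun j => (y j - flh_ogd_pred B G y init j) ^ 2 - (y j - u j) ^ 2) a b
  <= 10 * (B + G) ^ 2 * ln (INR n) - INR (S b - a) * (xs - u a) ^ 2.
Proof.
  intros Hab Hbn Hxs Hflat Hside.
  set (l := INR (S b - a)) in *.
  assert (Hl : 0 < l) by (apply lt_0_INR; lia).
  pose proof (flh_ogd_regret_vs_constant a b xs Hab ltac:(lia) Hxs) as Hvs.
  assert (Hcomp : sumR (fun j => (y j - xs) ^ 2 - (y j - u j) ^ 2) a b
                  = l * (xs ^ 2 - u a ^ 2) + 2 * (u a - xs) * sumR y a b).
  { rewrite !sumR_sum_range.
    rewrite (sum_range_ext _ (fun j => (xs ^ 2 - u a ^ 2) + 2 * (u a - xs) * y j))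
      by (intros j Hj; rewrite (Hflat j) by lia; ring).
    rewrite sum_range_plus, sum_range_scal, sum_range_const. reflexivity. }
  assert (Hgap : l * (xs ^ 2 - u a ^ 2) + 2 * (u a - xs) * sumR y a b
                 <= - l * (xs - u a) ^ 2).
  { replace (sumR y a b) with (l * (/ l * sumR y a b)) by (field; lra).
    apply comparator_shift_gap; lra. }
  assert (Hln : forall m, (1 <= m <= n)%nat -> (B + G) ^ 2 * ln (INR m) <= (B + G) ^ 2 * ln (INR n)).
  { intros m Hm. apply Rmult_le_compat_l; [apply pow2_ge_0|].
    apply ln_le; [apply lt_0_INR; lia | apply le_INR; lia]. }
  assert (Hlnn : 0 <= (B + G) ^ 2 * ln (INR n)).
  { apply Rmult_le_pos; [apply pow2_ge_0|]. rewrite <- ln_1.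
    apply ln_le; [lra | apply (le_INR 1); lia]. }
  pose proof (Hln (S b) ltac:(lia)). pose proof (Hln (S (S b - a)) ltac:(lia)).
  rewrite sumR_sum_range in Hvs, Hcomp |- *.
  rewrite (sum_range_ext _ (fun j => ((y j - flh_ogd_pred B G y init j) ^ 2 - (y j - xs) ^ 2)
                                     + ((y j - xs) ^ 2 - (y j - u j) ^ 2)))
    by (intros; ring).
  rewrite sum_range_plus, Hcomp. fold l. lra.
Qed.

End FLH_OGD.

Theorem lemma6 (n : nat) (B G Cn : R) (y : nat -> R) (init : nat -> R)
    (u : nat -> R) (lam : R) (gm gp s : nat -> R) (a b : nat) :
  (3 <= n)%nat -> 1 <= B -> B <= G ->
  (forall t, (1 <= t <= n)%nat -> -G <= y t <= G) ->
  (forall j, (1 <= j <= n)%nat -> -B <= init j <= B) ->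
  0 < Cn ->
  offline_optimal n B Cn y u ->
  KKT n B Cn y u lam gm gp s ->
  let l := INR (S b - a) in
  let ybar := / l * sumR y a b in
  let regret := sumR (fun j => (y j - flh_ogd_pred B G y init j) ^ 2
                              - (y j - u j) ^ 2) a b in
  (structure1 n B u a b -> B <= ybar ->
     regret <= 10 * (B + G) ^ 2 * ln (INR n) - l * (B - u a) ^ 2) /\
  (structure2 n B u a b -> ybar <= - B ->
     regret <= 10 * (B + G) ^ 2 * ln (INR n) - l * (B + u a) ^ 2).
Proof.
  intros Hn HB HG Hy Hinit _ _ _ l ybar regret.
  split.
  - intros (Ha & Hab & Hbn & Hflat & Hua & _) Hybar.
    apply (flh_ogd_regret_flat_segment n B G y init HB HG Hy Hinit u a b B);
      [lia | lia | lra | exact Hflat |].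
    fold l ybar. apply Rmult_le_0_r; lra.
  - intros (Ha & Hab & Hbn & Hflat & Hua & _) Hybar.
    replace ((B + u a) ^ 2) with ((- B - u a) ^ 2) by ring.
    apply (flh_ogd_regret_flat_segment n B G y init HB HG Hy Hinit u a b (- B));
      [lia | lia | lra | exact Hflat |].
    fold l ybar. apply Rmult_le_0_l; lra.
Qed.
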